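(* Let $C_m=\frac{1}{m+1}\binom{2m}{m}$ denote the Catalan numbers, and for integers $n\ge0$ define $$E(n)=\frac{\sum_{j=0}^{\lfloor n/2\rfloor}C_{n-2j}\,C_{2j}}{\sum_{\ell=0}^{n}C_{n-\ell}\,C_{\ell}}.$$ Then (i) the sequence $m\mapsto E(2m)$, $m\ge0$, is decreasing; (ii) $E(2m+1)=\tfrac12$ for all $m\ge0$. Consequently, for all $m\ge4$, $E(m)\le\max\{E(4),\tfrac12\}=E(4)$. *)

From mathcomp Require Import all_boot all_order all_algebra.
Set Implicit Arguments. Unset Strict Implicit. Unset Printing Implicit Defensive.
Import Order.TTheory GRing.Theory Num.Theory.
Local Open Scope ring_scope.

Definition catalan (m : nat) : rat := ('C(2 * m, m))%:R / (m.+1)%:R.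

Definition E (n : nat) : rat :=
  (\sum_(j < n./2.+1) catalan (n - 2 * j) * catalan (2 * j))
  / (\sum_(l < n.+1) catalan (n - l) * catalan l).

From mathcomp Require Import all_boot all_order all_algebra.
From mathcomp Require Import zify lra ring.
Import Order.TTheory GRing.Theory Num.Theory.
Local Open Scope ring_scope.

(* The denominator of E(n) is Segner's convolution sum_l C_l C_(n-l) = C_(n+1).
   For odd n, reversing the summation index exchanges the even- and odd-indexed
   terms, so the even ones make up exactly half of it and E(n) = 1/2.  For n = 2m
   the even-indexed terms are half the sum of the plain and the alternating
   convolutions, and the alternating one equals 2 4^m C_m - C_(2m+1); hence
   E(2m) = 4^m C_m / C_(2m+1), whose consecutive ratio
   4(2m+1)(2m+3) / ((4m+3)(4m+5)) is below 1.  Both convolution identities are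
   proved by induction: splitting n+3 as (k+1) + (n+2-k) inside the sum, the
   recurrence (k+2) C_(k+1) = (4k+2) C_k turns a convolution of order n+1 into
   one of order n. *)

Lemma catalan_factE n : catalan n = (2 * n)`!%:R / (n`!%:R * n.+1`!%:R).
Proof.
have := bin_fact (leq_addl n n); rewrite addnK addnn -mul2n => <-.
rewrite /catalan factS !natrM.
have fact_neq0 : n`!%:R != 0 :> rat by rewrite pnatr_eq0 -lt0n fact_gt0.
have n_ge0 := ler0n rat n.
by field; rewrite fact_neq0 lt0r_neq0 //; lra.
Qed.

Lemma catalanS n : catalan n.+1 = (4 * n%:R + 2) / (n%:R + 2) * catalan n.
Proof.
rewrite !catalan_factE mulnS add2n !factS !natrM -!natr1 natrM.
have fact_neq0 k : k`!%:R != 0 :> rat by rewrite pnatr_eq0 -lt0n fact_gt0.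
have n_ge0 := ler0n rat n.
by field; rewrite !fact_neq0 !lt0r_neq0 //; lra.
Qed.

Lemma catalan_gt0 n : 0 < catalan n.
Proof. by rewrite /catalan divr_gt0 // ltr0n bin_gt0 leq_pmull. Qed.

Lemma catalan0 : catalan 0 = 1.
Proof. by rewrite /catalan bin0 divr1. Qed.

Definition catalan_conv (w : nat -> rat) (n : nat) : rat :=
  \sum_(k < n.+1) w k * catalan k * catalan (n - k).

Lemma eq_catalan_conv (w1 w2 : nat -> rat) n :
  (forall k, (k <= n)%N -> w1 k = w2 k) -> catalan_conv w1 n = catalan_conv w2 n.
Proof. by move=> eq_w; apply: eq_bigr => k _; rewrite eq_w // -ltnS. Qed.

Lemma catalan_conv_lin (a b : rat) (w1 w2 : nat -> rat) n :
  catalan_conv (fun k => a * w1 k + b * w2 k) n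
  = a * catalan_conv w1 n + b * catalan_conv w2 n.
Proof.
by rewrite /catalan_conv !mulr_sumr -big_split; apply: eq_bigr => k _ /=; ring.
Qed.

Lemma catalan_convZ (a : rat) (w : nat -> rat) n :
  catalan_conv (fun k => a * w k) n = a * catalan_conv w n.
Proof. by rewrite /catalan_conv mulr_sumr; apply: eq_bigr => k _; ring. Qed.

Lemma catalan_conv_rev (w : nat -> rat) n :
  catalan_conv w n = catalan_conv (fun k => w (n - k)%N) n.
Proof.
rewrite /catalan_conv (reindex_inj rev_ord_inj); apply: eq_bigr => k _ /=.
by rewrite subSS subKn 1?mulrAC // -ltnS.
Qed.

Lemma catalan_conv_shiftl (w : nat -> rat) n :
  catalan_conv (fun k => (k%:R + 1) * w k) n.+1
  = w 0%N * catalan n.+1 + catalan_conv (fun k => (4 * k%:R + 2) * w k.+1) n.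
Proof.
rewrite /catalan_conv big_ord_recl /= catalan0 subn0; congr (_ + _); first ring.
apply: eq_bigr => k _; rewrite /bump /= add1n subSS catalanS -natr1.
have k_ge0 := ler0n rat k.
by field; rewrite lt0r_neq0 //; lra.
Qed.

Lemma catalan_conv_shiftr (w : nat -> rat) n :
  catalan_conv (fun k => (n.+1%:R - k%:R + 1) * w k) n.+1
  = w n.+1 * catalan n.+1
    + catalan_conv (fun k => (4 * (n%:R - k%:R) + 2) * w k) n.
Proof.
rewrite catalan_conv_rev.
rewrite (@eq_catalan_conv _ (fun k => (k%:R + 1) * w (n.+1 - k)%N)); last first.
  by move=> k le_kn; rewrite natrB ?subKn //; ring.
rewrite catalan_conv_shiftl subn0 [in RHS]catalan_conv_rev; congr (_ + _).
apply: eq_catalan_conv => k le_kn.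
by rewrite subSS natrB ?leq_subr //; congr (_ * _); ring.
Qed.

Lemma catalan_conv_shift (a b : rat) (w : nat -> rat) n :
  catalan_conv (fun k => (a * (k%:R + 1) + b * (n.+1%:R - k%:R + 1)) * w k) n.+1
  = (a * w 0%N + b * w n.+1) * catalan n.+1
    + catalan_conv (fun k => a * (4 * k%:R + 2) * w k.+1
                             + b * (4 * (n%:R - k%:R) + 2) * w k) n.
Proof.
rewrite (@eq_catalan_conv _ (fun k => a * ((k%:R + 1) * w k)
                                  + b * ((n.+1%:R - k%:R + 1) * w k))); last first.
  by move=> k _; ring.
rewrite catalan_conv_lin catalan_conv_shiftl catalan_conv_shiftr.
rewrite (@eq_catalan_conv (fun k => _ + _)
  (fun k => a * ((4 * k%:R + 2) * w k.+1)
                  + b * ((4 * (n%:R - k%:R) + 2) * w k))); last by move=> k _; ring.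
by rewrite catalan_conv_lin; ring.
Qed.

Lemma catalan_conv1 n : catalan_conv (fun=> 1) n = catalan n.+1.
Proof.
elim: n => [|n IH]; first by rewrite /catalan_conv big_ord1 catalanS catalan0; field.
have n_ge0 := ler0n rat n.
apply: (@mulfI _ (n%:R + 3)); first by rewrite lt0r_neq0 //; lra.
rewrite -catalan_convZ.
rewrite (@eq_catalan_conv _ (fun k => (1 * (k%:R + 1) + 1 * (n.+1%:R - k%:R + 1)) * 1));
  last by move=> k _; ring.
rewrite catalan_conv_shift.
rewrite (@eq_catalan_conv _ (fun k => (4 * n%:R + 4) * 1)); last by move=> k _; ring.
rewrite catalan_convZ IH (catalanS n.+1).
by field; rewrite lt0r_neq0 //; lra.
Qed.

Lemma catalan_conv_sign_even m :
  catalan_conv (fun k => (-1) ^+ k) (2 * m)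
  = 2 * 4 ^+ m * catalan m - catalan (2 * m).+1.
Proof.
elim: m => [|m IH]; first by rewrite /catalan_conv big_ord1 catalanS catalan0; field.
set n := (2 * m)%N; set s := fun k : nat => (-1) ^+ k : rat.
have s_even : s n = 1 by rewrite /s exprM sqrrN !expr1n.
have s_odd : s n.+1 = -1 by rewrite /s exprS -/(s n) s_even mulr1.
have n_ge0 := ler0n rat n.
rewrite mulnS add2n -/n.
apply: (@mulfI _ (n%:R + 4)); first by rewrite lt0r_neq0 //; lra.
rewrite -catalan_convZ.
rewrite (@eq_catalan_conv _
  (fun k => (1 * (k%:R + 1) + 1 * (n.+2%:R - k%:R + 1)) * s k)); last by move=> k _; ring.
rewrite catalan_conv_shift.
rewrite (@eq_catalan_conv _
  (fun k => (-4 * (k%:R + 1) + 4 * (n.+1%:R - k%:R + 1)) * s k)); last by move=> k _; rewrite /s exprS; ring.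
rewrite catalan_conv_shift.
rewrite (@eq_catalan_conv _ (fun k => (16 * n%:R + 16) * s k));
  last by move=> k _; rewrite /s exprS; ring.
have s_even2 : s n.+2 = 1 by rewrite /s exprS -/(s n.+1) s_odd mulrNN mulr1.
rewrite catalan_convZ IH -/n s_even2 s_odd /s expr0 !mul1r exprS.
rewrite (catalanS n.+2) (catalanS n.+1) (catalanS m) /n natrM.
have m_ge0 := ler0n rat m.
by field; rewrite !lt0r_neq0 //; lra.
Qed.

Lemma sum_ord_double (V : nmodType) (f : nat -> V) m :
  \sum_(l < 2 * m) f l = \sum_(j < m) (f (2 * j)%N + f (2 * j).+1).
Proof.
elim: m => [|m IH]; first by rewrite !big_ord0.
by rewrite mulnS add2n !big_ord_recr /= IH addrA.
Qed.

Lemma catalan_conv_even_part m :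
  catalan_conv (fun k => 1 + (-1) ^+ k) (2 * m)
  = 2 * \sum_(j < m.+1) catalan (2 * m - 2 * j) * catalan (2 * j).
Proof.
have sign_even j : (-1) ^+ (2 * j) = 1 :> rat by rewrite exprM sqrrN !expr1n.
rewrite /catalan_conv big_ord_recr /=.
rewrite (@sum_ord_double _ (fun k => (1 + (-1) ^+ k) * catalan k * catalan (2 * m - k))).
rewrite [in RHS]big_ord_recr /= mulrDr mulr_sumr subnn sign_even.
congr (_ + _); last ring.
by apply: eq_bigr => j _; rewrite exprS sign_even; ring.
Qed.

Lemma catalan_convolution n :
  \sum_(l < n.+1) catalan (n - l) * catalan l = catalan n.+1.
Proof. by rewrite -catalan_conv1; apply: eq_bigr => l _; ring. Qed.

Lemma E_even m : E (2 * m) = 4 ^+ m * catalan m / catalan (2 * m).+1.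
Proof.
rewrite /E catalan_convolution.
have -> : ((2 * m)./2 = m)%N by rewrite mul2n doubleK.
congr (_ / _); apply: (@mulfI _ 2) => //.
rewrite -catalan_conv_even_part.
rewrite (@eq_catalan_conv _ (fun k => 1 * 1 + 1 * (-1) ^+ k)); last by move=> k _; ring.
by rewrite catalan_conv_lin catalan_conv1 catalan_conv_sign_even; ring.
Qed.

Lemma E_odd m : E (2 * m + 1) = 1 / 2.
Proof.
rewrite /E catalan_convolution.
have -> : ((2 * m + 1)./2 = m)%N by rewrite addn1 mul2n /= uphalf_double.
set N := \sum_(j < m.+1) _.
have odd_part :
    \sum_(j < m.+1) catalan (2 * m + 1 - (2 * j).+1) * catalan (2 * j).+1 = N.
  rewrite /N (reindex_inj rev_ord_inj); apply: eq_bigr => j _ /=.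
  by rewrite mulrC; congr (catalan _ * catalan _); have := ltn_ord j; lia.
have twoN : catalan (2 * m + 1).+1 = 2 * N.
  rewrite -catalan_convolution.
  have -> : ((2 * m + 1).+1 = 2 * m.+1)%N by lia.
  rewrite (@sum_ord_double _ (fun l => catalan (2 * m + 1 - l) * catalan l)).
  by rewrite big_split /= odd_part -/N; ring.
have N_gt0 : 0 < N by have := catalan_gt0 (2 * m + 1).+1; rewrite twoN; lra.
by rewrite twoN; field; rewrite lt0r_neq0.
Qed.

Lemma E_even_ratio m :
  E (2 * m.+1)
  = 4 * (2 * m%:R + 1) * (2 * m%:R + 3) / ((4 * m%:R + 3) * (4 * m%:R + 5))
    * E (2 * m).
Proof.
rewrite !E_even mulnS add2n (catalanS (2 * m).+2) (catalanS (2 * m).+1).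
rewrite (catalanS m) exprS.
have C_gt0 := catalan_gt0 (2 * m).+1; have m_ge0 := ler0n rat m.
by field; rewrite !lt0r_neq0 //; lra.
Qed.

Lemma E_even_decreasing m : E (2 * m.+1) < E (2 * m).
Proof.
have E_gt0 : 0 < E (2 * m).
  by rewrite E_even divr_gt0 ?catalan_gt0 // mulr_gt0 ?catalan_gt0 // exprn_gt0.
have m_ge0 := ler0n rat m.
rewrite E_even_ratio gtr_pMl // ltr_pdivrMr ?mul1r; first nra.
by rewrite mulr_gt0 //; lra.
Qed.

Lemma E4 : E 4 = 16 / 21.
Proof. by rewrite (E_even 2) (_ : (2 * 2).+1 = 5)%N // !catalanS catalan0; field. Qed.

Theorem mainTheorem4 :
  (forall m : nat, E (2 * m.+1) < E (2 * m)) /\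
  (forall m : nat, E (2 * m + 1) = 1 / 2) /\
  (forall m : nat, (4 <= m)%N ->
     E m <= Num.max (E 4) (1 / 2) /\ Num.max (E 4) (1 / 2) = E 4).
Proof.
have E4_max : Num.max (E 4) (1 / 2) = E 4 by rewrite E4 max_l //; lra.
have E_even_nonincr :
    {homo (fun k => E (2 * k)) : k l / (k <= l)%N >-> l <= k}.
  apply: homo_leq => [x | y x z le_yx le_zy | k]; first exact: lexx.
    exact: le_trans le_zy le_yx.
  exact/ltW/E_even_decreasing.
split; first exact: E_even_decreasing.
split; first exact: E_odd.
move=> m m_ge4; split=> //; rewrite E4_max.
have half_ge2 : (2 <= m./2)%N := half_leq m_ge4.
rewrite -(odd_double_half m) -mul2n; case: (odd m) => /=.
- by rewrite addnC E_odd E4; lra.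
- by rewrite add0n; exact: (E_even_nonincr 2 m./2 half_ge2).
Qed.
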